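(* Let $I$ be a finite set and $t$ a rooted tree with vertex set $I$. The interval $[\widehat{0},t]$ of the poset $\Pi_{\operatorname{NAP}}(I)$ is isomorphic to the poset $[t,\widehat{1}]_s$ of all sub-rooted trees of $t$ ordered by $\leq_s$.
   Context: $\Pi_{\operatorname{NAP}}(I)$ is the set of forests of rooted trees whose vertex set is exactly $I$ (each vertex labelled by an element of $I$). It is partially ordered as follows: $y$ covers $x$ iff $y$ is obtained from $x$ by adding an edge from the root of one component of $x$ to the root of another component of $x$ (the latter root remaining the root of the merged tree); $\leq$ is the reflexive–transitive closure. Its minimum $\widehat{0}$ is the forest of one-vertex trees; a rooted tree $t$ on $I$ is an element of $\Pi_{\operatorname{NAP}}(I)$. A sub-rooted tree of $t$ is the restriction of $t$ to a subset of vertices containing the root of $t$ and such that every vertex on the path from the root to a vertex of the subset is in the subset (a lower ideal of $t$ viewed as a poset with root as minimum). For rooted trees, $t\leq_s t'$ means $t'$ is a sub-rooted tree of $t$. $[t,\widehat{1}]_s$ denotes the set of sub-rooted trees of $t$ with the order $\leq_s$ (so $t$ is its minimum and the one-vertex tree on the root, $\widehat{1}$, is its maximum). *)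

From mathcomp Require Import all_boot.
From Stdlib Require Import Relations.
Set Implicit Arguments. Unset Strict Implicit. Unset Printing Implicit Defensive.

(* A forest of rooted trees with vertex set I is encoded by its parent
   function p : I -> option I  (p v = None  iff  v is a root), subject to
   acyclicity: following parents from any vertex reaches a root. *)
Definition forest (I : finType) := {ffun I -> option I}.

Fixpoint par_iter (I : finType) (p : forest I) (n : nat) (v : I) : option I :=
  match n with
  | 0 => Some v
  | n'.+1 => obind p (par_iter p n' v)
  end.

Definition is_forest (I : finType) (p : forest I) : Prop :=
  forall v : I, exists n, par_iter p n v = None.

Definition is_root (I : finType) (p : forest I) (r : I) : bool := p r == None.

Definition is_rooted_tree (I : finType) (t : forest I) : Prop :=
  is_forest t /\ exists! r : I, is_root t r.

Definition on_root_path (I : finType) (p : forest I) (u v : I) : Prop :=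
  exists n, par_iter p n v = Some u.

Definition nap_cover (I : finType) (x y : forest I) : Prop :=
  is_forest x /\
  exists r1 r2 : I, [/\ r1 != r2, is_root x r1, is_root x r2 &
    y = [ffun v => if v == r1 then Some r2 else x v]].

Definition nap_le (I : finType) (x y : forest I) : Prop :=
  is_forest x /\ is_forest y /\ clos_refl_trans (forest I) (@nap_cover I) x y.

Definition is_subrooted (I : finType) (t : forest I) (S : {set I}) : Prop :=
  (forall r, is_root t r -> r \in S) /\
  (forall v u, v \in S -> on_root_path t u v -> u \in S).

(* Order <=_s on sub-rooted trees of t (each identified with its vertex set,
   the tree being the restriction of t): t|S1 <=_s t|S2 iff t|S2 is a
   sub-rooted tree of t|S1.  Since S1 is a lower ideal of t, the root paths in
   t|S1 are those of t. *)
Definition le_s (I : finType) (t : forest I) (S1 S2 : {set I}) : Prop :=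
  S2 \subset S1 /\ is_subrooted t S2.

From mathcomp Require Import all_boot.
From Stdlib Require Import Relations.
Set Implicit Arguments. Unset Strict Implicit. Unset Printing Implicit Defensive.

(* The forests below a forest t in Pi_NAP are exactly the forests [cut t S]
   obtained from t by deleting the edges leaving a sub-rooted set S, and
   [cut t S] has root set S.  Going up by one cover step adds the edge leaving
   one root, i.e. removes a vertex from the root set; conversely, any
   sub-rooted S' inside S is reached from S by repeatedly removing a vertex of
   S :\: S' of maximal depth, which has no child left in S. *)

Section Forests.
Variable I : finType.
Implicit Types (p x y t : forest I) (S : {set I}) (u v w : I).

Definition roots p : {set I} := [set v | is_root p v].

Definition cut t S : forest I := [ffun v => if v \in S then None else t v].

Lemma par_iterSr p n v : par_iter p n.+1 v = obind (par_iter p n) (p v).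
Proof.
elim: n v => [|n IHn] v; first by rewrite /=; case: (p v).
change (obind p (par_iter p n.+1 v) = obind (par_iter p n.+1) (p v)).
by rewrite IHn; case: (p v).
Qed.

Lemma on_root_path_parent t u v : t u = Some v -> on_root_path t v u.
Proof. by exists 1. Qed.

Lemma is_forest_sub x y :
  (forall u, x u = None \/ x u = y u) -> is_forest y -> is_forest x.
Proof.
move=> sub_xy Fy v; have [n Hn] := Fy v; exists n.
suff: par_iter x n v = None \/ par_iter x n v = par_iter y n v by case=> ->.
elim: {Hn}n => [|n [] IHn] /=; [by right | by left; rewrite IHn |].
by rewrite IHn; case: (par_iter y n v) => [u|]; [apply: sub_xy | left].
Qed.

Lemma is_forest_cut t S : is_forest t -> is_forest (cut t S).
Proof. by apply: is_forest_sub => u; rewrite ffunE; case: ifP; auto. Qed.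

Lemma forest_parent_neq t v : is_forest t -> t v <> Some v.
Proof.
move=> Ft tv; have [n] := Ft v.
suff ->: par_iter t n v = Some v by [].
by elim: n => //= n ->; rewrite /= tv.
Qed.

Lemma roots_cut t S : is_subrooted t S -> roots (cut t S) = S.
Proof.
case=> rootsS _; apply/setP => v; rewrite !inE /is_root ffunE.
by case: ifP => // vS; apply/negbTE/negP => /rootsS; rewrite vS.
Qed.

Lemma subrooted_roots t : is_subrooted t (roots t).
Proof.
split=> [r|v u]; rewrite !inE // /is_root => /eqP tv [[|n]].
  by case=> <-; apply/eqP.
by rewrite par_iterSr tv.
Qed.

Lemma cut_roots t : cut t (roots t) = t.
Proof. by apply/ffunP => v; rewrite ffunE inE /is_root; case: eqP. Qed.

Lemma nap_rt_roots x y :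
  clos_refl_trans (forest I) (@nap_cover I) x y -> roots y \subset roots x.
Proof.
elim=> [{}x {}y [_ [r1 [r2 [_ _ _ ->]]]] | // | x' y' z _ sub_yx _ sub_zy].
  by apply/subsetP => v; rewrite !inE /is_root ffunE; case: (v == r1).
exact: subset_trans sub_zy sub_yx.
Qed.

Lemma subrooted_setD1 t S v :
  is_subrooted t S -> ~~ is_root t v ->
  (forall c, t c = Some v -> c \notin S) -> is_subrooted t (S :\ v).
Proof.
case=> rootsS pathS vNroot childNS; split=> [r rroot | u a].
  rewrite in_setD1 rootsS // andbT.
  by apply: contraNneq vNroot => <-.
rewrite in_setD1 => /andP [uv uS] [m Hm].
rewrite in_setD1 (pathS u a uS) ?andbT; last by exists m.
apply/eqP => av; move: Hm; rewrite {}av; case: m => [[uv']|m /=].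
  by rewrite uv' eqxx in uv.
case Hc: (par_iter t m u) => [c|] //= tc.
by move: (childNS c tc); rewrite (pathS u c uS) //; exists m.
Qed.

Lemma nap_cover_cut_setD1 t S v :
  is_forest t -> is_subrooted t S -> v \in S -> ~~ is_root t v ->
  nap_cover (cut t S) (cut t (S :\ v)).
Proof.
move=> Ft [_ pathS] vS; rewrite /is_root; case tv: (t v) => [w|] // _.
have wS : w \in S by apply: (pathS v) vS _; apply: on_root_path_parent.
split; first exact: is_forest_cut.
exists v, w; split; rewrite /is_root ?ffunE ?vS ?wS //.
  by apply/eqP => vw; apply: (forest_parent_neq (v := v) Ft); rewrite tv vw.
apply/ffunP => u; rewrite !ffunE in_setD1.
by case: eqP => [->|_] //=; rewrite tv.
Qed.

Lemma nap_cover_cut t S x :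
  is_subrooted t S -> nap_cover x (cut t S) ->
  exists2 S', is_subrooted t S' & x = cut t S'.
Proof.
case=> rootsS pathS [_ [r1 [r2 [r12 r1root r2root def_cut]]]].
have cut_r1 : cut t S r1 = Some r2 by rewrite def_cut ffunE eqxx.
have r1NS : r1 \notin S by apply/negP => r1S; move: cut_r1; rewrite ffunE r1S.
have tr1 : t r1 = Some r2 by rewrite -cut_r1 ffunE (negbTE r1NS).
have r2S : r2 \in S.
  have: cut t S r2 = None by rewrite def_cut ffunE eq_sym (negbTE r12); apply/eqP.
  by rewrite ffunE; case: ifP => // r2NS /eqP /rootsS; rewrite r2NS.
exists (r1 |: S); first split=> [r /rootsS rS | u a]; rewrite ?in_setU1 ?rS ?orbT //.
  case/orP=> [/eqP -> | uS] [m Hm]; last by rewrite (pathS u a uS) ?orbT //; exists m.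
  case: m Hm => [[->]|m]; first by rewrite eqxx.
  by rewrite par_iterSr tr1 => Hm; rewrite (pathS r2 a r2S) ?orbT //; exists m.
apply/ffunP => u; rewrite ffunE in_setU1; case: eqP => [-> | /eqP ur1] /=.
  exact/eqP.
have: cut t S u = x u by rewrite def_cut ffunE (negbTE ur1).
by rewrite ffunE => <-.
Qed.

Lemma nap_rt_cut t S x :
  is_subrooted t S -> clos_refl_trans (forest I) (@nap_cover I) x (cut t S) ->
  exists2 S', is_subrooted t S' & x = cut t S'.
Proof.
move=> HS /(@clos_rt_rt1n _ _ _ _); move def_z: (cut t S) => z x_z.
elim: x_z S HS def_z => [{}x | {}x y {}z cover_xy _ IHyz] S HS def_z.
  by exists S; rewrite -?def_z.
have [S' HS' def_y] := IHyz S HS def_z.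
by apply: nap_cover_cut HS' _; rewrite -def_y.
Qed.

Section Depth.
Variables (t : forest I) (Ft : is_forest t).

Lemma is_forest_exn v : exists n, par_iter t n v == None.
Proof. by have [n /eqP] := Ft v; exists n. Qed.

Definition depth v := ex_minn (is_forest_exn v).

Lemma depth_parent u v : t u = Some v -> depth v < depth u.
Proof.
rewrite /depth => tu; case: ex_minnP => a _ min_a.
case: ex_minnP => [[|b]] //; rewrite par_iterSr tu => Hb _.
by rewrite ltnS min_a.
Qed.

Lemma exists_childless (A : {set I}) :
  A != set0 -> exists2 v, v \in A & forall c, t c = Some v -> c \notin A.
Proof.
case/set0Pn => v0 /(arg_maxnP depth) [v vA max_v].
exists v => // c tc; apply/negP => /max_v.
by move/(leq_trans (depth_parent tc)); rewrite ltnn.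
Qed.

Lemma nap_rt_cut_subset S S' :
  is_subrooted t S -> is_subrooted t S' -> S' \subset S ->
  clos_refl_trans (forest I) (@nap_cover I) (cut t S) (cut t S').
Proof.
move: {2}#|S :\: S'| (erefl #|S :\: S'|) => n.
elim: n S => [|n IHn] S diff_n HS HS' sub_S'S.
  suff -> : S = S' by apply: rt_refl.
  by apply/eqP; rewrite eqEsubset sub_S'S -setD_eq0 -cards_eq0 diff_n.
have /exists_childless [v] : S :\: S' != set0 by rewrite -cards_eq0 diff_n.
rewrite inE => /andP [vNS' vS] childless.
have vNroot : ~~ is_root t v by apply: contra vNS'; case: HS' => rootsS' _ /rootsS'.
have childNS c : t c = Some v -> c \notin S.
  move=> tc; have := childless c tc; rewrite inE negb_and negbK => /orP [cS'|//].
  by case/negP: vNS'; case: HS' => _ /(_ c v cS'); apply; apply: on_root_path_parent.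
apply: rt_trans (rt_step _ _ _ _ (nap_cover_cut_setD1 Ft HS vS vNroot)) _.
apply: IHn (subrooted_setD1 HS vNroot childNS) HS' _.
  move: diff_n; rewrite (cardsD1 v) !inE vNS' vS add1n => -[<-].
  by rewrite setDDl setUC -setDDl.
apply/subsetP => u uS'; rewrite in_setD1 (subsetP sub_S'S) // andbT.
by apply: contraTneq uS' => ->.
Qed.

Lemma nap_le_cut S S' :
  is_subrooted t S -> is_subrooted t S' ->
  nap_le (cut t S) (cut t S') <-> S' \subset S.
Proof.
move=> HS HS'; split=> [[_ [_ /nap_rt_roots]] | sub_S'S].
  by rewrite !roots_cut.
by split; [|split]; [exact: is_forest_cut.. | exact: nap_rt_cut_subset].
Qed.

End Depth.
End Forests.

Theorem proposition6p1 (I : finType) (t : forest I) :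
  is_rooted_tree t ->
  exists (f : forest I -> {set I}) (g : {set I} -> forest I),
    [/\ (forall x, nap_le x t -> is_subrooted t (f x)),
        (forall S, is_subrooted t S -> nap_le (g S) t),
        (forall x, nap_le x t -> g (f x) = x),
        (forall S, is_subrooted t S -> f (g S) = S) &
        (forall x y, nap_le x t -> nap_le y t ->
           (nap_le x y <-> le_s t (f x) (f y)))].
Proof.
case=> Ft _.
have below x : nap_le x t -> exists2 S, is_subrooted t S & x = cut t S.
  by case=> _ [_ x_t]; apply: nap_rt_cut (subrooted_roots t) _; rewrite cut_roots.
exists (@roots I), (cut t); split.
- by move=> x /below [S HS ->]; rewrite roots_cut.
- move=> S HS; rewrite -{2}(cut_roots t); apply/nap_le_cut => //.
    exact: subrooted_roots.
  by apply/subsetP => r; rewrite inE; case: HS => rootsS _ /rootsS.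
- by move=> x /below [S HS ->]; rewrite roots_cut.
- exact: roots_cut.
move=> x y /below [S HS ->] /below [S' HS' ->]; rewrite !roots_cut //.
apply: iff_trans (nap_le_cut Ft HS HS') _.
by split=> [|[]].
Qed.
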